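(* Let $(\Delta x,\Delta y)\in\mathbb{R}^2$, $(o_x,o_y)\in\mathbb{R}^2$, $(x_0,y_0,\theta_0)\in\mathbb{R}^3$, $R>0$ and $t_{\max}>0$. Consider the forward left-turning arc robot path $$x(t)=x_0-R\sin\theta_0+R\sin(\theta_0+t),\quad y(t)=y_0+R\cos\theta_0-R\cos(\theta_0+t),\quad \theta(t)=\theta_0+t,\qquad t\in(0,t_{\max}),$$ (an arc of radius $R$ with centre angle $t_{\max}$), and let the anchoring point have world coordinates $\tilde x(t)=x(t)+\cos\theta(t)\Delta x-\sin\theta(t)\Delta y$, $\tilde y(t)=y(t)+\sin\theta(t)\Delta x+\cos\theta(t)\Delta y$, assumed different from $(o_x,o_y)$ for all $t$. Define $$A=o_x-x_0+R\sin\theta_0,\quad B=o_y-y_0-R\cos\theta_0,\quad C=A\Delta x-BR+B\Delta y,\quad D=AR-A\Delta y+B\Delta x,$$ assume $(C,D)\neq(0,0)$, and let $\varphi$ be the angle with $\cos\varphi=\frac{C}{\sqrt{C^2+D^2}}$, $\sin\varphi=\frac{D}{\sqrt{C^2+D^2}}$. If either $$\frac{A^2+B^2}{\sqrt{C^2+D^2}}>\cos(t+\theta_0-\varphi)\ \text{ for all } t\in(0,t_{\max}),$$ or $$\frac{A^2+B^2}{\sqrt{C^2+D^2}}<\cos(t+\theta_0-\varphi)\ \text{ for all } t\in(0,t_{\max}),$$ then the relative angle function $\Phi(t)=\arctan\left(\frac{o_y-\tilde y(t)}{o_x-\tilde x(t)}\right)-\theta(t)$ is monotonic on $(0,t_{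\max})$.
   Context: $(\Delta x,\Delta y)$ is the position of the tether–robot anchoring point $s$ in the robot's egocentric frame, and $(o_x,o_y)$ is the (fixed) position of the last tether–obstacle contact point $o$ in the world frame. In $\Phi$, $\arctan\left(\frac{o_y-\tilde y}{o_x-\tilde x}\right)$ denotes the direction angle of the vector from $(\tilde x,\tilde y)$ to $(o_x,o_y)$, taken as a continuous (differentiable) branch along the path. *)

From Stdlib Require Import Reals.
Open Scope R_scope.

Definition path_x (x0 th0 Rr t : R) : R := x0 - Rr * sin th0 + Rr * sin (th0 + t).
Definition path_y (y0 th0 Rr t : R) : R := y0 + Rr * cos th0 - Rr * cos (th0 + t).
Definition path_th (th0 t : R) : R := th0 + t.

Definition anchor_x (x0 th0 Rr dx dy t : R) : R :=
  path_x x0 th0 Rr t + cos (path_th th0 t) * dx - sin (path_th th0 t) * dy.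
Definition anchor_y (y0 th0 Rr dx dy t : R) : R :=
  path_y y0 th0 Rr t + sin (path_th th0 t) * dx + cos (path_th th0 t) * dy.

Definition coefA (ox x0 th0 Rr : R) : R := ox - x0 + Rr * sin th0.
Definition coefB (oy y0 th0 Rr : R) : R := oy - y0 - Rr * cos th0.
Definition coefC (A B Rr dx dy : R) : R := A * dx - B * Rr + B * dy.
Definition coefD (A B Rr dx dy : R) : R := A * Rr - A * dy + B * dx.

(* Rotating the vector from the anchoring point to o by the heading -theta(t)
   gives the position (u, v) of o in the robot frame; (u, v) is a trigonometric
   polynomial in t and Phi is a continuous polar angle of it.  The derivative of
   a continuous polar angle of (u, v) is (u v' - v u') / (u^2 + v^2), and here
   u v' - v u' = sqrt (C^2 + D^2) cos (theta - phi) - (A^2 + B^2).  Either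
   hypothesis fixes the sign of this numerator on (0, tmax), so Phi is monotonic. *)

From Stdlib Require Import Reals Lra.
From Coquelicot Require Import Coquelicot.
Open Scope R_scope.

Definition polar_angle_of (a x y : R) : Prop :=
  cos a = x / sqrt (x ^ 2 + y ^ 2) /\ sin a = y / sqrt (x ^ 2 + y ^ 2).

Lemma cos_sin_sum_sq (a : R) : cos a ^ 2 + sin a ^ 2 = 1.
Proof. rewrite <- (sin2_cos2 a). unfold Rsqr. ring. Qed.

(* With the junk value [x / 0 = 0], the angle condition alone forces (x, y) <> 0. *)
Lemma polar_angle_of_norm_pos (a x y : R) :
  polar_angle_of a x y -> 0 < x ^ 2 + y ^ 2.
Proof.
  intros [Hc Hs].
  destruct (Rle_lt_or_eq_dec 0 (x ^ 2 + y ^ 2)) as [Hpos | Hzero]; [nra | exact Hpos |].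
  exfalso.
  rewrite <- Hzero, sqrt_0 in Hc, Hs. unfold Rdiv in Hc, Hs.
  rewrite Rinv_0, Rmult_0_r in Hc, Hs.
  pose proof (cos_sin_sum_sq a) as H1. rewrite Hc, Hs in H1. lra.
Qed.

Lemma polar_angle_of_sqrt_pos (a x y : R) :
  polar_angle_of a x y -> 0 < sqrt (x ^ 2 + y ^ 2).
Proof. intros H. apply sqrt_lt_R0, (polar_angle_of_norm_pos a), H. Qed.

Lemma polar_angle_of_rotate (a th x y : R) :
  polar_angle_of a x y ->
  polar_angle_of (a - th) (x * cos th + y * sin th) (y * cos th - x * sin th).
Proof.
  intros Ha. pose proof (polar_angle_of_sqrt_pos _ _ _ Ha) as Hn.
  destruct Ha as [Hc Hs].
  assert (Hnorm : (x * cos th + y * sin th) ^ 2 + (y * cos th - x * sin th) ^ 2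
                  = x ^ 2 + y ^ 2).
  { pose proof (cos_sin_sum_sq th) as H1.
    transitivity ((x ^ 2 + y ^ 2) * (cos th ^ 2 + sin th ^ 2)); [ring|].
    rewrite H1. ring. }
  unfold polar_angle_of. rewrite Hnorm, cos_minus, sin_minus, Hc, Hs.
  split; field; lra.
Qed.

Lemma polar_angle_of_atan (a x y : R) :
  polar_angle_of a x y -> - (PI / 2) < a < PI / 2 -> a = atan (y / x).
Proof.
  intros Ha Hrange. pose proof (polar_angle_of_sqrt_pos _ _ _ Ha) as Hn.
  destruct Ha as [Hc Hs].
  assert (Hcos : 0 < cos a) by (apply cos_gt_0; lra).
  assert (Hx : 0 < x).
  { replace x with (cos a * sqrt (x ^ 2 + y ^ 2)) by (rewrite Hc; field; lra).
    apply Rmult_lt_0_compat; lra. }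
  replace (y / x) with (tan a) by (unfold tan; rewrite Hc, Hs; field; lra).
  symmetry. apply atan_tan. exact Hrange.
Qed.

Lemma polar_angle_cos_sub (phi C D th : R) :
  polar_angle_of phi C D ->
  C * cos th + D * sin th = sqrt (C ^ 2 + D ^ 2) * cos (th - phi).
Proof.
  intros Hphi. pose proof (polar_angle_of_sqrt_pos _ _ _ Hphi) as Hn.
  destruct Hphi as [Hc Hs].
  rewrite cos_minus, Hc, Hs. field. lra.
Qed.

Lemma is_derive_atan_div_at_root (p q : R -> R) (t0 dp dq : R) :
  is_derive p t0 dp -> is_derive q t0 dq -> p t0 = 0 -> q t0 <> 0 ->
  is_derive (fun t => atan (p t / q t)) t0 (dp / q t0).
Proof.
  intros Hp Hq Hp0 Hq0.
  assert (Hcomp := is_derive_comp atan (fun t => p t / q t) t0 _ _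
                     (is_derive_atan _) (is_derive_div p q t0 dp dq Hp Hq Hq0)).
  simpl in Hcomp. rewrite Hp0 in Hcomp.
  replace (dp / q t0) with
    (scal (((dp * q t0 - 0 * dq) / (q t0 ^ 2))) (/ (1 + (0 / q t0)²))); [exact Hcomp|].
  unfold scal; simpl. unfold mult; simpl. unfold Rsqr. field. exact Hq0.
Qed.

Lemma is_derive_polar_angle (f u v : R -> R) (t0 du dv : R) :
  is_derive u t0 du -> is_derive v t0 dv -> continuity_pt f t0 ->
  locally t0 (fun t => polar_angle_of (f t) (u t) (v t)) ->
  is_derive f t0 ((u t0 * dv - v t0 * du) / (u t0 ^ 2 + v t0 ^ 2)).
Proof.
  intros Hu Hv Hf Hloc.
  pose proof (locally_singleton _ _ Hloc) as Hb.
  pose proof (polar_angle_of_sqrt_pos _ _ _ Hb) as Hn.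
  destruct Hb as [Hc Hs].
  set (b := f t0) in *.
  set (n := sqrt (u t0 ^ 2 + v t0 ^ 2)) in *.
  (* Near t0, f t - b is the angle of (u t, v t) rotated by -b, which stays in
     (-PI/2, PI/2) by continuity and is therefore an arctangent. *)
  apply is_derive_ext_loc with
    (f := fun t => b + atan ((v t * cos b - u t * sin b) / (u t * cos b + v t * sin b))).
  - pose proof (proj1 (continuity_pt_locally f t0) Hf (mkposreal _ PI2_RGT_0)) as Hnear.
    generalize (filter_and _ _ Hloc Hnear). apply filter_imp.
    intros t [Ht Hdist]. simpl in Hdist. fold b in Hdist. apply Rabs_lt_between in Hdist.
    enough (Hatan : f t - b = atan ((v t * cos b - u t * sin b) / (u t * cos b + v t * sin b)))
      by lra.
    apply polar_angle_of_atan; [apply polar_angle_of_rotate, Ht | exact Hdist].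
  - assert (Hn2 : u t0 ^ 2 + v t0 ^ 2 = n * n)
      by (unfold n; rewrite sqrt_sqrt; [reflexivity | nra]).
    assert (Hq0 : u t0 * cos b + v t0 * sin b = n).
    { rewrite Hc, Hs. transitivity ((u t0 ^ 2 + v t0 ^ 2) / n); [field; lra|].
      rewrite Hn2. field. lra. }
    assert (Hp0 : v t0 * cos b - u t0 * sin b = 0) by (rewrite Hc, Hs; field; lra).
    replace ((u t0 * dv - v t0 * du) / (u t0 ^ 2 + v t0 ^ 2)) with
      (0 + (dv * cos b - du * sin b) / (u t0 * cos b + v t0 * sin b))
      by (rewrite Hq0, Hn2, Hc, Hs; field; lra).
    apply (is_derive_plus (fun _ => b)); [exact (is_derive_const b t0) |].
    apply (is_derive_atan_div_at_root (fun t => v t * cos b - u t * sin b)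
             (fun t => u t * cos b + v t * sin b) t0 _ (du * cos b + dv * sin b));
      [| | exact Hp0 | lra].
    + apply (is_derive_minus (fun t => v t * cos b) (fun t => u t * sin b)).
      * exact (is_derive_scal_l v t0 dv (cos b) Hv).
      * exact (is_derive_scal_l u t0 du (sin b) Hu).
    + apply (is_derive_plus (fun t => u t * cos b) (fun t => v t * sin b)).
      * exact (is_derive_scal_l u t0 du (cos b) Hu).
      * exact (is_derive_scal_l v t0 dv (sin b) Hv).
Qed.

Lemma nondecreasing_of_derive_pos (f df : R -> R) (a b : R) :
  (forall t, a < t < b -> is_derive f t (df t)) ->
  (forall t, a < t < b -> 0 < df t) ->
  forall s t, a < s -> s <= t -> t < b -> f s <= f t.
Proof.
  intros Hder Hpos s t Hs Hst Htb.
  destruct (Rle_lt_or_eq_dec s t Hst) as [Hlt | ->]; [| lra].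
  apply Rlt_le, (incr_function f (Finite a) (Finite b) df); simpl; try assumption.
  - intros x Hax Hxb. apply Hder. split; assumption.
  - intros x Hax Hxb. apply Hpos. split; assumption.
Qed.

Lemma monotone_of_derive_sign (f df : R -> R) (a b : R) :
  (forall t, a < t < b -> is_derive f t (df t)) ->
  (forall t, a < t < b -> 0 < df t) \/ (forall t, a < t < b -> df t < 0) ->
  (forall s t, a < s -> s <= t -> t < b -> f s <= f t) \/
  (forall s t, a < s -> s <= t -> t < b -> f t <= f s).
Proof.
  intros Hder [Hpos | Hneg].
  - left. exact (nondecreasing_of_derive_pos f df a b Hder Hpos).
  - right. intros s t Hs Hst Htb.
    apply Ropp_le_cancel.
    apply (nondecreasing_of_derive_pos (fun t => - f t) (fun t => - df t) a b);
      try assumption.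
    + intros x Hx. apply (is_derive_opp f), Hder, Hx.
    + intros x Hx. specialize (Hneg x Hx). lra.
Qed.

(* [(ego_x, ego_y)] is the vector from the anchoring point to o written in the
   robot frame of heading [th]; in the path below [r = Rr - dy]. *)
Definition ego_x (A B dx th : R) : R := A * cos th + B * sin th - dx.
Definition ego_y (A B r th : R) : R := B * cos th - A * sin th + r.

Lemma anchor_rotated_x (dx dy ox oy x0 y0 th0 Rr t : R) :
  (ox - anchor_x x0 th0 Rr dx dy t) * cos (th0 + t)
  + (oy - anchor_y y0 th0 Rr dx dy t) * sin (th0 + t)
  = ego_x (coefA ox x0 th0 Rr) (coefB oy y0 th0 Rr) dx (th0 + t).
Proof.
  unfold ego_x, anchor_x, anchor_y, path_x, path_y, path_th, coefA, coefB.
  set (th := th0 + t). pose proof (cos_sin_sum_sq th) as H1.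
  transitivity ((ox - x0 + Rr * sin th0) * cos th + (oy - y0 - Rr * cos th0) * sin th
                - dx * (cos th ^ 2 + sin th ^ 2)); [ring|].
  rewrite H1. ring.
Qed.

Lemma anchor_rotated_y (dx dy ox oy x0 y0 th0 Rr t : R) :
  (oy - anchor_y y0 th0 Rr dx dy t) * cos (th0 + t)
  - (ox - anchor_x x0 th0 Rr dx dy t) * sin (th0 + t)
  = ego_y (coefA ox x0 th0 Rr) (coefB oy y0 th0 Rr) (Rr - dy) (th0 + t).
Proof.
  unfold ego_y, anchor_x, anchor_y, path_x, path_y, path_th, coefA, coefB.
  set (th := th0 + t). pose proof (cos_sin_sum_sq th) as H1.
  transitivity ((oy - y0 - Rr * cos th0) * cos th - (ox - x0 + Rr * sin th0) * sin th
                + (Rr - dy) * (cos th ^ 2 + sin th ^ 2)).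
  - ring.
  - rewrite H1. ring.
Qed.

Lemma polar_angle_of_relative (dx dy ox oy x0 y0 th0 Rr a t : R) :
  polar_angle_of a (ox - anchor_x x0 th0 Rr dx dy t) (oy - anchor_y y0 th0 Rr dx dy t) ->
  polar_angle_of (a - path_th th0 t)
    (ego_x (coefA ox x0 th0 Rr) (coefB oy y0 th0 Rr) dx (th0 + t))
    (ego_y (coefA ox x0 th0 Rr) (coefB oy y0 th0 Rr) (Rr - dy) (th0 + t)).
Proof.
  intros Ha.
  rewrite <- (anchor_rotated_x dx dy ox oy x0 y0 th0 Rr t),
    <- (anchor_rotated_y dx dy ox oy x0 y0 th0 Rr t).
  apply polar_angle_of_rotate, Ha.
Qed.

Lemma is_derive_ego_x (A B dx th0 t : R) :
  is_derive (fun s => ego_x A B dx (th0 + s)) t (B * cos (th0 + t) - A * sin (th0 + t)).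
Proof. unfold ego_x. auto_derive; [exact I | ring]. Qed.

Lemma is_derive_ego_y (A B r th0 t : R) :
  is_derive (fun s => ego_y A B r (th0 + s)) t (- (A * cos (th0 + t) + B * sin (th0 + t))).
Proof. unfold ego_y. auto_derive; [exact I | ring]. Qed.

Lemma ego_cross (A B Rr dx dy th : R) :
  ego_x A B dx th * (- (A * cos th + B * sin th))
  - ego_y A B (Rr - dy) th * (B * cos th - A * sin th)
  = coefC A B Rr dx dy * cos th + coefD A B Rr dx dy * sin th - (A ^ 2 + B ^ 2).
Proof.
  pose proof (cos_sin_sum_sq th) as H1. unfold ego_x, ego_y, coefC, coefD.
  transitivity ((A * dx - B * Rr + B * dy) * cos th + (A * Rr - A * dy + B * dx) * sin th
                - (A ^ 2 + B ^ 2) * (cos th ^ 2 + sin th ^ 2)); [ring|].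
  rewrite H1. ring.
Qed.

Theorem theorem3 (dx dy ox oy x0 y0 th0 Rr tmax phi : R) (alpha : R -> R) :
  0 < Rr -> 0 < tmax ->
  (forall t, 0 < t < tmax ->
     (anchor_x x0 th0 Rr dx dy t, anchor_y y0 th0 Rr dx dy t) <> (ox, oy)) ->
  let A := coefA ox x0 th0 Rr in
  let B := coefB oy y0 th0 Rr in
  let C := coefC A B Rr dx dy in
  let D := coefD A B Rr dx dy in
  (C, D) <> (0, 0) ->
  cos phi = C / sqrt (C ^ 2 + D ^ 2) ->
  sin phi = D / sqrt (C ^ 2 + D ^ 2) ->
  (forall t, 0 < t < tmax -> continuity_pt alpha t) ->
  (forall t, 0 < t < tmax ->
     let vx := ox - anchor_x x0 th0 Rr dx dy t in
     let vy := oy - anchor_y y0 th0 Rr dx dy t in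
     cos (alpha t) = vx / sqrt (vx ^ 2 + vy ^ 2) /\
     sin (alpha t) = vy / sqrt (vx ^ 2 + vy ^ 2)) ->
  ((forall t, 0 < t < tmax ->
      (A ^ 2 + B ^ 2) / sqrt (C ^ 2 + D ^ 2) > cos (t + th0 - phi)) \/
   (forall t, 0 < t < tmax ->
      (A ^ 2 + B ^ 2) / sqrt (C ^ 2 + D ^ 2) < cos (t + th0 - phi))) ->
  let Phi := fun t => alpha t - path_th th0 t in
  (forall s t, 0 < s -> s <= t -> t < tmax -> Phi s <= Phi t) \/
  (forall s t, 0 < s -> s <= t -> t < tmax -> Phi t <= Phi s).
Proof.
  intros _ _ _ A B C D _ Hcphi Hsphi Hcont Halpha Hcase Phi.
  set (u := fun t => ego_x A B dx (th0 + t)).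
  set (v := fun t => ego_y A B (Rr - dy) (th0 + t)).
  set (S := sqrt (C ^ 2 + D ^ 2)) in *.
  assert (Hphi : polar_angle_of phi C D) by exact (conj Hcphi Hsphi).
  assert (HS : 0 < S) by exact (polar_angle_of_sqrt_pos _ _ _ Hphi).
  assert (Hpolar : forall t, 0 < t < tmax -> polar_angle_of (Phi t) (u t) (v t)).
  { intros t Ht. apply polar_angle_of_relative, Halpha, Ht. }
  assert (Hder : forall t, 0 < t < tmax ->
            is_derive Phi t
              ((S * cos (t + th0 - phi) - (A ^ 2 + B ^ 2)) / (u t ^ 2 + v t ^ 2))).
  { intros t Ht.
    pose proof (ego_cross A B Rr dx dy (th0 + t)) as Hnum. fold C D in Hnum.
    rewrite (polar_angle_cos_sub _ _ _ _ Hphi) in Hnum. fold S in Hnum.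
    rewrite (Rplus_comm t th0), <- Hnum.
    apply (is_derive_polar_angle Phi u v t);
      [apply is_derive_ego_x | apply is_derive_ego_y | |].
    - unfold Phi, path_th. apply continuity_pt_minus; [apply Hcont, Ht | reg].
    - apply (locally_interval _ t (Finite 0) (Finite tmax)); simpl; try apply Ht.
      intros s Hs0 Hs1. apply Hpolar. split; assumption. }
  apply (monotone_of_derive_sign Phi _ 0 tmax Hder).
  assert (Hk : A ^ 2 + B ^ 2 = S * ((A ^ 2 + B ^ 2) / S)) by (field; lra).
  destruct Hcase as [Habove | Hbelow]; [right | left]; intros t Ht;
    pose proof (polar_angle_of_norm_pos _ _ _ (Hpolar t Ht)) as Hnorm.
  - apply Rdiv_neg_pos; [| exact Hnorm]. specialize (Habove t Ht). nra.
  - apply Rdiv_lt_0_compat; [| exact Hnorm]. specialize (Hbelow t Ht). nra.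
Qed.
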